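(* Let $A \subset \mathbb{Z}^d$ consist of exactly $d+2$ points, contain $0$, and generate $\mathbb{Z}^d$ additively. Denote the nonzero elements of $A$ by $v_0, v_1, \ldots, v_d$, where $v_1, \ldots, v_d$ are linearly independent. For integers $k$ let $C_k = \{\sum_{i=1}^d n_i v_i : n_i \in \mathbb{N}, \ \sum_{i=1}^d n_i \leq k\}$, with $C_k := \emptyset$ for $k < 0$, and for integers $j, h \geq 0$ let $A_{j,h} = j v_0 + C_{h-j}$. Let $\Gamma = \mathrm{span}_{\mathbb{N}}\{v_1,\ldots,v_d\}$, let $N$ be the order of $v_0$ in $\mathbb{Z}^d / \mathrm{span}_{\mathbb{Z}}\{v_1,\ldots,v_d\}$, and let $w \in \Gamma$ be the point with $\Gamma \cap (N v_0 + \Gamma) = w + \Gamma$ (explicitly, if $N v_0 = \sum_{i=1}^d c_i v_i$ with $c_i \in \mathbb{Z}$, then $w = \sum_{i=1}^d \max(c_i,0) v_i$). Let \[ H = \max\{\ell : A_{j,h} \cap A_{j',h} = \emptyset \text{ whenever } j \neq j' \text{ and } h < \ell\}, \] which is a finite integer. Then for all $a, j, h \in \mathbb{N}$, \[ A_{j,h} \cap A_{j+aN,h} = j v_0 + a w + C_{h - j - aH}. \]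
   Context: $\mathbb{N} = \{0,1,2,\ldots\}$; in the definition of $H$, $j,j',h$ range over nonnegative integers. For a vector $x$ and set $S$, $x + S = \{x + s : s \in S\}$. *)

From mathcomp Require Import all_boot all_order all_algebra.
Set Implicit Arguments. Unset Strict Implicit. Unset Printing Implicit Defensive.
Import Order.TTheory GRing.Theory Num.Theory.
Local Open Scope ring_scope.

Section Defs.
Variable d : nat.

Definition in_Zspan (vs : 'I_d -> 'rV[int]_d) (x : 'rV[int]_d) : Prop :=
  exists c : 'I_d -> int, x = \sum_i c i *: vs i.

Definition in_Gamma (vs : 'I_d -> 'rV[int]_d) (x : 'rV[int]_d) : Prop :=
  exists n : 'I_d -> nat, x = \sum_i (n i)%:Z *: vs i.

Definition in_C (vs : 'I_d -> 'rV[int]_d) (k : int) (x : 'rV[int]_d) : Prop :=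
  exists n : 'I_d -> nat, (\sum_i (n i)%:Z <= k) /\ x = \sum_i (n i)%:Z *: vs i.

Definition in_A (v0 : 'rV[int]_d) (vs : 'I_d -> 'rV[int]_d) (j h : nat) (x : 'rV[int]_d) : Prop :=
  exists y : 'rV[int]_d, in_C vs (h%:Z - j%:Z) y /\ x = v0 *+ j + y.

Definition lin_indep (vs : 'I_d -> 'rV[int]_d) : Prop :=
  forall c : 'I_d -> int, \sum_i c i *: vs i = 0 -> forall i, c i = 0.

Definition generates (v0 : 'rV[int]_d) (vs : 'I_d -> 'rV[int]_d) : Prop :=
  forall x : 'rV[int]_d, exists (c0 : int) (c : 'I_d -> int), x = c0 *: v0 + \sum_i c i *: vs i.

Definition is_order_mod (v0 : 'rV[int]_d) (vs : 'I_d -> 'rV[int]_d) (N : nat) : Prop :=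
  (0 < N)%N /\ in_Zspan vs (v0 *+ N) /\
  forall m : nat, (0 < m < N)%N -> ~ in_Zspan vs (v0 *+ m).

Definition is_w (v0 : 'rV[int]_d) (vs : 'I_d -> 'rV[int]_d) (N : nat) (w : 'rV[int]_d) : Prop :=
  in_Gamma vs w /\
  forall x : 'rV[int]_d, (in_Gamma vs x /\ exists y : 'rV[int]_d, in_Gamma vs y /\ x = v0 *+ N + y) <->
            (exists y : 'rV[int]_d, in_Gamma vs y /\ x = w + y).

Definition disjoint_below (v0 : 'rV[int]_d) (vs : 'I_d -> 'rV[int]_d) (l : int) : Prop :=
  forall j j' h : nat, j <> j' -> h%:Z < l ->
    forall x : 'rV[int]_d, ~ (in_A v0 vs j h x /\ in_A v0 vs j' h x).

Definition is_H (v0 : 'rV[int]_d) (vs : 'I_d -> 'rV[int]_d) (H : int) : Prop :=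
  disjoint_below v0 vs H /\ forall l : int, disjoint_below v0 vs l -> l <= H.

End Defs.

(* Write N v0 = sum_i c_i v_i and split c = c+ - c- into positive and negative
   parts.  As v_1, ..., v_d are independent, a point x = j v0 + sum_i n_i v_i of
   A_{j,h} lies in A_{j+aN,h} iff its coefficients there, n - a c, are
   nonnegative; then m := n - a c+ = (n - a c) - a c- is nonnegative, and the
   size bounds on n and on n - a c read sum m <= h - j - a sum c+ and
   sum m <= h - j - a (N + sum c-).  So the intersection is j v0 + a w0 +
   C_{h-j-a H0} with w0 = sum_i c+_i v_i and H0 = max (sum c+, N + sum c-).
   The definition of w forces w = w0.  Two sets A_{j,h}, A_{j',h} can only meet
   when N divides j' - j, hence by the above only when h >= H0, while A_{0,H0}
   and A_{N,H0} share w0; so H = H0. *)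

From mathcomp Require Import all_boot all_order all_algebra.
From mathcomp Require Import zify ring.
Import Order.TTheory GRing.Theory Num.Theory.
Set Implicit Arguments. Unset Strict Implicit. Unset Printing Implicit Defensive.
Local Open Scope ring_scope.

Section Combinations.
Variables (d : nat) (vs : 'I_d -> 'rV[int]_d).

Definition lcomb (f : 'I_d -> int) : 'rV[int]_d := \sum_i f i *: vs i.

Lemma eq_lcomb f g : f =1 g -> lcomb f = lcomb g.
Proof. by move=> fg; apply: eq_bigr => i _; rewrite fg. Qed.

Lemma lcomb0 : lcomb (fun=> 0) = 0.
Proof. by apply: big1 => i _; rewrite scale0r. Qed.

Lemma lcombD f g : lcomb (fun i => f i + g i) = lcomb f + lcomb g.
Proof. by rewrite /lcomb -big_split; apply: eq_bigr => i _; rewrite scalerDl. Qed.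

Lemma lcombB f g : lcomb (fun i => f i - g i) = lcomb f - lcomb g.
Proof. by rewrite /lcomb -sumrB; apply: eq_bigr => i _; rewrite scalerBl. Qed.

Lemma lcombZ k f : lcomb (fun i => k * f i) = k *: lcomb f.
Proof. by rewrite /lcomb scaler_sumr; apply: eq_bigr => i _; rewrite scalerA. Qed.

Lemma lcomb_inj : lin_indep vs -> forall f g, lcomb f = lcomb g -> f =1 g.
Proof.
move=> hind f g fg i; apply/eqP; rewrite -subr_eq0; apply/eqP.
by apply: (hind (fun i => f i - g i)); rewrite -/(lcomb _) lcombB fg subrr.
Qed.

Lemma nat_coeffs (m : 'I_d -> int) : (forall i, 0 <= m i) ->
  exists n : 'I_d -> nat, m =1 (fun i => (n i)%:Z).
Proof. by move=> m_ge0; exists (fun i => absz (m i)) => i; rewrite gez0_abs. Qed.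

Lemma in_GammaP x :
  in_Gamma vs x <-> exists2 m, (forall i, 0 <= m i) & x = lcomb m.
Proof.
split=> [[n ->]|[m /nat_coeffs[n mn] ->]]; first by exists (fun i => (n i)%:Z).
by exists n; apply: eq_lcomb.
Qed.

Lemma in_CP k x : in_C vs k x <->
  exists m, [/\ forall i, 0 <= m i, \sum_i m i <= k & x = lcomb m].
Proof.
split=> [[n [n_le ->]]|[m [/nat_coeffs[n mn] m_le ->]]].
  by exists (fun i => (n i)%:Z).
exists n; split; last exact: eq_lcomb.
by rewrite -(eq_bigr _ (fun i _ => mn i)).
Qed.

Lemma in_C_ge0 k x : in_C vs k x -> 0 <= k.
Proof. by case=> n [n_le _]; apply: le_trans n_le; apply: sumr_ge0. Qed.

End Combinations.

Lemma scalez_nat (V : lmodType int) (v : V) (a : nat) : a%:Z *: v = v *+ a.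
Proof. by rewrite -scaler_nat natz. Qed.

Section OrderModSpan.
Variables (d : nat) (v0 : 'rV[int]_d) (vs : 'I_d -> 'rV[int]_d) (N : nat).
Hypothesis hN : is_order_mod v0 vs N.

Lemma order_mod_dvd k : in_Zspan vs (v0 *+ k) -> (N %| k)%N.
Proof.
case: hN => N_gt0 [[c hc] N_min] [f hf].
have r_span : in_Zspan vs (v0 *+ (k %% N)).
  exists (fun i => f i - (k %/ N)%N%:Z * c i).
  rewrite -/(lcomb _ _) lcombB lcombZ scalez_nat /lcomb -hc -hf -mulrnA.
  have -> : v0 *+ k = v0 *+ (N * (k %/ N)) + v0 *+ (k %% N).
    by rewrite -mulrnDr mulnC -divn_eq.
  by rewrite addrC (addKr (v0 *+ _)).
apply: contraT; rewrite /dvdn -lt0n => r_gt0.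
by case: (N_min _ _ r_span); rewrite r_gt0 ltn_pmod.
Qed.

End OrderModSpan.

Section PositiveParts.
Variable I : finType.
Implicit Type c : I -> int.

Definition pospart c i := Num.max (c i) 0.
Definition negpart c i := Num.max (- c i) 0.

Lemma pospart_ge0 c i : 0 <= pospart c i.
Proof. rewrite /pospart; lia. Qed.

Lemma negpart_ge0 c i : 0 <= negpart c i.
Proof. rewrite /negpart; lia. Qed.

Lemma pospartE c i : pospart c i = c i + negpart c i.
Proof. rewrite /pospart /negpart; lia. Qed.

Lemma mul_pospart_le (a n x : int) :
  0 <= a -> a * x <= n -> 0 <= n -> a * Num.max x 0 <= n.
Proof. by move=> a_ge0 ax_le n_ge0; rewrite maxr_pMr // mulr0 ge_max ax_le. Qed.

Lemma sum_pospart_ge0 c : 0 <= \sum_i pospart c i.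
Proof. by apply: sumr_ge0 => i _; apply: pospart_ge0. Qed.

Lemma sum_negpart_ge0 c : 0 <= \sum_i negpart c i.
Proof. by apply: sumr_ge0 => i _; apply: negpart_ge0. Qed.

End PositiveParts.

Section Intersections.
Variables (d : nat) (v0 : 'rV[int]_d) (vs : 'I_d -> 'rV[int]_d).
Hypothesis hind : lin_indep vs.
Variables (N : nat) (c : 'I_d -> int).
Hypothesis hc : v0 *+ N = lcomb vs c.

Definition collision_height : int :=
  Num.max (\sum_i pospart c i) (\sum_i negpart c i + N%:Z).

Lemma in_A_lcomb j h m : (forall i, 0 <= m i) -> \sum_i m i <= h%:Z - j%:Z ->
  in_A v0 vs j h (v0 *+ j + lcomb vs m).
Proof. by move=> m_ge0 m_le; exists (lcomb vs m); split=> //; apply/in_CP; exists m. Qed.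

Lemma mulrn_add_order j a : v0 *+ (j + a * N) = v0 *+ j + lcomb vs (fun i => a%:Z * c i).
Proof. by rewrite mulrnDr mulnC mulrnA hc lcombZ scalez_nat. Qed.

Lemma in_A_meet_sub a j h x :
  in_A v0 vs j h x -> in_A v0 vs (j + a * N) h x ->
  exists y, in_C vs (h%:Z - j%:Z - a%:Z * collision_height) y /\
            x = v0 *+ j + lcomb vs (pospart c) *+ a + y.
Proof.
move=> [_ [/in_CP[n1 [n1_ge0 n1_le ->]] ->]] [_ [/in_CP[n2 [n2_ge0 n2_le ->]]]].
rewrite mulrn_add_order -addrA => /addrI; rewrite -lcombD => /(lcomb_inj hind) n12.
pose m i := n1 i - a%:Z * pospart c i.
have m_ge0 i : 0 <= m i by rewrite subr_ge0 mul_pospart_le // n12 lerDl.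
have mE i : m i = n2 i - a%:Z * negpart c i by rewrite /m n12 pospartE; ring.
have sum_m1 : \sum_i m i = \sum_i n1 i - a%:Z * \sum_i pospart c i.
  by rewrite sumrB mulr_sumr.
have sum_m2 : \sum_i m i = \sum_i n2 i - a%:Z * \sum_i negpart c i.
  by rewrite (eq_bigr _ (fun i _ => mE i)) sumrB mulr_sumr.
exists (lcomb vs m); split.
  by apply/in_CP; exists m; split=> //; rewrite /collision_height maxr_pMr //; nia.
by rewrite lcombB lcombZ scalez_nat -addrA [_ *+ a + _]addrC subrK.
Qed.

Lemma in_A_meet_sup a j h y :
  in_C vs (h%:Z - j%:Z - a%:Z * collision_height) y ->
  in_A v0 vs j h (v0 *+ j + lcomb vs (pospart c) *+ a + y) /\
  in_A v0 vs (j + a * N) h (v0 *+ j + lcomb vs (pospart c) *+ a + y).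
Proof.
move=> /in_CP[m [m_ge0 m_le ->]].
have P_ge0 := sum_pospart_ge0 c; have Q_ge0 := sum_negpart_ge0 c.
move: m_le; rewrite /collision_height maxr_pMr // => m_le.
split.
  rewrite -[_ *+ a]scalez_nat -lcombZ -addrA -lcombD; apply: in_A_lcomb.
    by move=> i; rewrite addr_ge0 ?mulr_ge0 ?pospart_ge0.
  have -> : \sum_i (a%:Z * pospart c i + m i) = a%:Z * \sum_i pospart c i + \sum_i m i.
    by rewrite big_split mulr_sumr.
  nia.
have -> : v0 *+ j + lcomb vs (pospart c) *+ a + lcomb vs m =
          v0 *+ (j + a * N) + lcomb vs (fun i => a%:Z * negpart c i + m i).
  rewrite mulrn_add_order -[_ *+ a]scalez_nat -lcombZ -!addrA -!lcombD.
  by congr (_ + _); apply: eq_lcomb => i /=; rewrite pospartE; ring.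
apply: in_A_lcomb.
  by move=> i; rewrite addr_ge0 ?mulr_ge0 ?negpart_ge0.
have -> : \sum_i (a%:Z * negpart c i + m i) = a%:Z * \sum_i negpart c i + \sum_i m i.
  by rewrite big_split mulr_sumr.
nia.
Qed.

Lemma in_A_meetP a j h x :
  in_A v0 vs j h x /\ in_A v0 vs (j + a * N) h x <->
  exists y, in_C vs (h%:Z - j%:Z - a%:Z * collision_height) y /\
            x = v0 *+ j + lcomb vs (pospart c) *+ a + y.
Proof. by split=> [[]|[y [Cy ->]]]; [apply: in_A_meet_sub | apply: in_A_meet_sup]. Qed.

Lemma is_w_pospart w : is_w v0 vs N w -> w = lcomb vs (pospart c).
Proof.
case=> /in_GammaP[nw nw_ge0 ->] w_meet.
have [_ [_ [/in_GammaP[ny ny_ge0 ->]]]] :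
    in_Gamma vs (lcomb vs nw) /\
    exists y, in_Gamma vs y /\ lcomb vs nw = v0 *+ N + y.
  apply/w_meet; exists 0; split; last by rewrite addr0.
  by apply/in_GammaP; exists (fun=> 0); rewrite ?lcomb0.
rewrite hc -lcombD => /(lcomb_inj hind) nwE.
have [_ [/in_GammaP[nz nz_ge0 ->]]] :
    exists y, in_Gamma vs y /\ lcomb vs (pospart c) = lcomb vs nw + y.
  apply/w_meet; split.
    by apply/in_GammaP; exists (pospart c); first exact: pospart_ge0.
  exists (lcomb vs (negpart c)); split.
    by apply/in_GammaP; exists (negpart c); first exact: negpart_ge0.
  by rewrite hc -lcombD; apply: eq_lcomb => i; rewrite pospartE.
rewrite -lcombD => /(lcomb_inj hind) posE.
apply: eq_lcomb => i; apply/eqP; rewrite eq_le {1}posE lerDl nz_ge0 /=.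
by rewrite /pospart ge_max nw_ge0 andbT nwE lerDl.
Qed.

Lemma collision_height_ge0 : 0 <= collision_height.
Proof. by rewrite /collision_height le_max sum_pospart_ge0. Qed.

Hypothesis hN : is_order_mod v0 vs N.

Lemma collision_height_le j1 j2 h x : (j1 < j2)%N ->
  in_A v0 vs j1 h x -> in_A v0 vs j2 h x -> collision_height <= h%:Z.
Proof.
move=> lt12 A1; rewrite -(subnKC (ltnW lt12)) => A2.
have : in_Zspan vs (v0 *+ (j2 - j1)).
  case: A1 A2 => _ [/in_CP[n1 [_ _ ->]] ->] [_ [/in_CP[n2 [_ _ ->]]]].
  rewrite mulrnDr -addrA => /addrI n12.
  by exists (fun i => n1 i - n2 i); rewrite -/(lcomb _ _) lcombB n12 addrK.
case/(order_mod_dvd hN)/dvdnP=> q j12E; rewrite j12E in A2.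
have q_gt0 : (0 < q)%N by move: lt12; rewrite -subn_gt0 j12E muln_gt0 => /andP[].
have [y [/in_C_ge0 h_ge _]] := in_A_meet_sub A1 A2.
have := collision_height_ge0; nia.
Qed.

Lemma is_H_collision_height H : is_H v0 vs H -> H = collision_height.
Proof.
case=> H_disj H_max; apply/eqP; rewrite eq_le; apply/andP; split; last first.
  apply: H_max => j1 j2 h ne12 h_lt x [A1 A2].
  have [lt12|lt21|eq12] := ltngtP j1 j2; last exact: ne12.
    by have := collision_height_le lt12 A1 A2; lia.
  by have := collision_height_le lt21 A2 A1; lia.
rewrite leNgt; apply/negP => lt_H.
have H0_ge0 := collision_height_ge0.
have N_gt0 : (0 < N)%N by case: hN.
have C0 : in_C vs ((absz collision_height)%:Z - 0%:Z - 1%:Z * collision_height) 0.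
  by apply/in_CP; exists (fun=> 0); rewrite big1 ?lcomb0 //; split=> //; lia.
have [A1 A2] := in_A_meet_sup C0; rewrite add0n mul1n in A2.
apply: (H_disj 0%N N (absz collision_height) _ _ _ (conj A1 A2)); first by lia.
by rewrite gez0_abs.
Qed.

End Intersections.

Theorem lemma6p2 (d : nat) (v0 : 'rV[int]_d) (vs : 'I_d -> 'rV[int]_d)
  (* A = {0, v0, v_1, ..., v_d} has exactly d+2 points *)
  (hv0 : v0 != 0) (hvs0 : forall i, vs i != 0) (hv0vs : forall i, v0 != vs i)
  (hinj : injective vs)
  (hgen : generates v0 vs) (hind : lin_indep vs)
  (N : nat) (hN : is_order_mod v0 vs N)
  (w : 'rV[int]_d) (hw : is_w v0 vs N w)
  (H : int) (hH : is_H v0 vs H) :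
  forall (a j h : nat) (x : 'rV[int]_d),
    (in_A v0 vs j h x /\ in_A v0 vs (j + a * N) h x) <->
    (exists y, in_C vs (h%:Z - j%:Z - a%:Z * H) y /\ x = v0 *+ j + w *+ a + y).
Proof.
have [_ [[c hc] _]] := hN.
rewrite (is_w_pospart hind hc hw) (is_H_collision_height hind hc hN hH).
exact: in_A_meetP.
Qed.
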